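(* Let $(X,T)$ and $(Y,S)$ be minimal topological dynamical systems with $T$ a homeomorphism, and let $\pi: X\to Y$ be a factor map. If $\pi$ is proximal and not almost one-to-one, then $(X,T)$ is strongly $\mathcal{F}_{ip}$-sensitive.
   Context: A topological dynamical system: compact metric space $(X,d)$ with continuous surjection $T$; minimal means every orbit is dense. A factor map $\pi$ is a continuous surjection with $\pi\circ T=S\circ\pi$. A pair $(x,y)$ is proximal if $\inf_n d(T^nx,T^ny)=0$; $\pi$ is proximal if all pairs in the same fiber are proximal; $\pi$ is almost one-to-one if $\{x:\pi^{-1}(\pi(x))=\{x\}\}$ is dense. $\mathcal{F}_{ip}$ is the family of subsets of $\mathbb{Z}_+$ containing some $FS((p_i)_{i=1}^\infty)=\{\sum_{i\in\alpha}p_i:\alpha\subset\mathbb{N}$ finite nonempty$\}$, $p_i\in\mathbb{N}$. $(X,T)$ is strongly $\mathcal{F}_{ip}$-sensitive if there is $\delta>0$ such that for each nonempty open $U$ there are $x,y\in U$ with $\{n\in\mathbb{Z}_+:d(T^nx,T^ny)>\delta\}\in\mathcal{F}_{ip}$. *)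

From HB Require Import structures.
From mathcomp Require Import all_boot all_order all_algebra.
From mathcomp Require Import all_classical all_reals all_analysis.
Set Implicit Arguments. Unset Strict Implicit. Unset Printing Implicit Defensive.
Import Order.TTheory GRing.Theory Num.Theory.
Local Open Scope classical_set_scope.
Local Open Scope ring_scope.

Section Dyn.
Variable R : realType.

Definition TDS (X : metricType R) (T : X -> X) : Prop :=
  compact [set: X] /\ continuous T /\ (forall y : X, exists x, T x = y).

Definition homeomorphism (X : metricType R) (T : X -> X) : Prop :=
  exists g : X -> X, [/\ cancel T g, cancel g T, continuous T & continuous g].

Definition orbit (X : metricType R) (T : X -> X) (x : X) : set X :=
  [set iter n T x | n in [set: nat]].

Definition minimal (X : metricType R) (T : X -> X) : Prop :=
  forall x : X, closure (orbit T x) = [set: X].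

Definition factor_map (X Y : metricType R) (T : X -> X) (S : Y -> Y)
  (pi : X -> Y) : Prop :=
  [/\ continuous pi, (forall y : Y, exists x, pi x = y) & forall x, pi (T x) = S (pi x)].

(* (x,y) proximal: inf_n d(T^n x, T^n y) = 0 (distances are >= 0) *)
Definition proximal_pair (X : metricType R) (T : X -> X) (x y : X) : Prop :=
  forall e : R, 0 < e -> exists n : nat, mdist (iter n T x) (iter n T y) < e.

Definition proximal_map (X Y : metricType R) (T : X -> X) (pi : X -> Y) : Prop :=
  forall x1 x2 : X, pi x1 = pi x2 -> proximal_pair T x1 x2.

Definition almost_one_to_one (X Y : metricType R) (pi : X -> Y) : Prop :=
  dense [set x : X | pi @^-1` [set pi x] = [set x]].

End Dyn.

Definition FS (p : nat -> nat) : set nat :=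
  [set n | exists2 a : seq nat, uniq a && (a != [::]) & n = \sum_(i <- a) p i]%N.

Definition F_ip : set (set nat) :=
  [set A | exists p : nat -> nat, (forall i, 0 < p i)%N /\ FS p `<=` A].

Definition strongly_Fip_sensitive (R : realType) (X : metricType R) (T : X -> X) : Prop :=
  exists2 delta : R, 0 < delta &
    forall U : set X, open U -> U !=set0 ->
      exists x y, [/\ U x, U y &
        F_ip [set n | delta < mdist (iter n T x) (iter n T y)]].

From Pilot Require Import Defs.
From HB Require Import structures.
From mathcomp Require Import all_boot all_order all_algebra.
From mathcomp Require Import all_classical all_reals all_analysis.
From mathcomp Require Import lra.
Set Implicit Arguments. Unset Strict Implicit. Unset Printing Implicit Defensive.
Import Order.TTheory GRing.Theory Num.Theory.
Local Open Scope classical_set_scope.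
Local Open Scope ring_scope.

(* Since [pi] is not almost one-to-one, a Baire argument gives a ball in which the
   points having a fiber-mate at distance at least [eps] are dense.  Minimality makes
   the returns to that ball syndetic and the inverse iterates [T^-i], [i <= N], are
   equicontinuous, so every ball contains a point [a] with a fiber-mate [x] at distance
   at least a fixed [gam]; some [T^j x] lies in the same ball, hence far from [x].
   Since [a] and [x] are proximal, [x] returns near itself at times [p] at which
   [T^p a] is near [x] as well; choosing such return times inductively keeps the
   orbits of [a] and [T^j x] [gam/4]-apart at all their finite sums. *)

Lemma all_ltn_rem (k : nat) (s : seq nat) : uniq s ->
  all (fun i => i < k.+1)%N s -> all (fun i => i < k)%N (rem k s).
Proof.
move=> us /allP sk; apply/allP => i; rewrite mem_rem_uniq // inE => /andP [ik iS].
by rewrite ltn_neqAle ik -ltnS sk.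
Qed.

Section IPSetConstruction.
Variables (P Q : nat -> Prop).
Hypothesis P0 : P 0.
Hypothesis extend : forall F : seq nat, {in F, forall t, P t} ->
  exists2 p, (0 < p)%N & {in F, forall t, P (t + p) /\ Q (t + p)}.

Lemma F_ip_of_extend : F_ip Q.
Proof.
have step (F : seq nat) : exists p, {in F, forall t, P t} ->
    (0 < p)%N /\ {in F, forall t, P (t + p) /\ Q (t + p)}.
  case: (pselect {in F, forall t, P t}) => [PF|nF]; last by exists 0%N.
  by have [p p0 Hp] := extend PF; exists p.
have [c Hc] := choice step.
(* [sums k] lists the finite sums of [p 0], ..., [p k.-1], with the empty sum [0]. *)
pose fix sums k := if k is k'.+1 then sums k' ++ map (addn^~ (c (sums k'))) (sums k')
                   else [:: 0%N].
pose p k := c (sums k).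
have sumsP k : {in sums k, forall t, P t}.
  elim: k => [|k IH] t /=; first by rewrite inE => /eqP ->.
  rewrite mem_cat => /orP [/IH //|/mapP [t' t'F ->]].
  by have [_ /(_ t' t'F) []] := Hc _ IH.
have sum_in_sums k s : uniq s -> all (fun i => i < k)%N s ->
    (\sum_(i <- s) p i)%N \in sums k.
  elim: k s => [|k IH] s us; first by case: s us => [|? ?] //= _ _; rewrite big_nil.
  move=> sk; have skr := all_ltn_rem us sk; rewrite /= mem_cat.
  case ks: (k \in s); last first.
    by rewrite (rem_id (negbT ks)) in skr; apply/orP; left; apply: IH.
  rewrite (perm_big _ (perm_to_rem ks)) big_cons /= addnC.
  by apply/orP; right; apply: map_f; apply: IH; rewrite ?rem_uniq.
have sumQ k s : uniq s -> s != [::] -> all (fun i => i < k)%N s ->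
    Q (\sum_(i <- s) p i)%N.
  elim: k s => [|k IH] s us sn; first by case: s us sn.
  move=> sk; have skr := all_ltn_rem us sk.
  case ks: (k \in s); last by rewrite (rem_id (negbT ks)) in skr; apply: IH.
  rewrite (perm_big _ (perm_to_rem ks)) big_cons /= addnC.
  by have [_ /(_ _ (sum_in_sums _ _ (rem_uniq _ us) skr)) []] := Hc _ (sumsP k).
exists p; split; first by move=> i; have [] := Hc _ (sumsP i).
move=> n [s /andP [us sn] ->]; apply: (sumQ (\max_(i <- s) i).+1) => //.
by apply/allP => i iS; rewrite ltnS (leq_bigmax_seq (F := id)).
Qed.

End IPSetConstruction.

Section CompactMetric.
Variables (R : realType) (X : metricType R).
Hypothesis cX : compact [set: X].
Local Notation d := (@mdist R X).

Lemma continuous_mdist_lt (Y : metricType R) (f : X -> Y) (x : X) :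
  {for x, continuous f} -> forall e, 0 < e ->
  exists2 r, 0 < r & forall y, d x y < r -> mdist (f x) (f y) < e.
Proof.
move=> fx e e0.
have /nbhs_ballP [r r0 H] : \forall y \near x, ball (f x) e (f y) by exact: cvg_ball.
by exists r => // y xy; have := H y; rewrite !ballEmdist; apply.
Qed.

Lemma open_mdist_lt (U : set X) (x : X) : open U -> U x ->
  exists2 r, 0 < r & forall y, d x y < r -> U y.
Proof.
move=> oU Ux; have /nbhs_ballP [r r0 H] : nbhs x U by exact: open_nbhs_nbhs.
by exists r => // y xy; apply: H; rewrite ballEmdist.
Qed.

Lemma continuous_iter (f : X -> X) (n : nat) : continuous f -> continuous (iter n f).
Proof.
move=> cf; elim: n => [|n IH] x /=; first exact: cvg_id.
exact: continuous_comp (IH x) (cf _).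
Qed.

Lemma compact_cluster_seq (u : nat -> X) :
  exists x, forall e, 0 < e -> forall N, exists2 n, (N <= n)%N & d x (u n) < e.
Proof.
have [x [_ cl]] := @cX (u @ \oo) _ filterT; exists x => e e0 N.
have [||y [[n Nn <-]]] := cl [set u n | n in [set n | (N <= n)%N]] (ball x e).
- by exists N => // n /= Nn; exists n.
- exact: nbhsx_ballx.
by rewrite ballEmdist => xn; exists n.
Qed.

Lemma compact_unif_continuous (Y : metricType R) (f : X -> Y) : continuous f ->
  forall e, 0 < e -> exists2 r, 0 < r & forall x y, d x y < r -> mdist (f x) (f y) < e.
Proof.
move=> cf e e0; apply: contrapT => nH.
have bad n : exists xy : X * X,
    d xy.1 xy.2 < n.+1%:R^-1 /\ e <= mdist (f xy.1) (f xy.2).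
  apply: contrapT => nex; apply: nH; exists n.+1%:R^-1; first by rewrite invr_gt0.
  move=> x y xy; rewrite ltNge; apply/negP => exy; apply: nex.
  by exists (x, y).
have [u Hu] := choice bad.
have [x cx] := compact_cluster_seq (fun n => (u n).1).
have e2 : 0 < e / 2 by rewrite divr_gt0.
have [r r0 Hr] := continuous_mdist_lt (cf x) e2.
have r2 : 0 < r / 2 by rewrite divr_gt0.
have [N] : exists N : nat, N.+1%:R^-1 < r / 2.
  by have [N] := ltr_add_invr r2; rewrite add0r; exists N.
move=> HN; have [n Nn xn] := cx _ r2 N; have [un fun_] := Hu n.
have u_close : d (u n).1 (u n).2 < r / 2.
  rewrite (lt_le_trans un) // (le_trans _ (ltW HN)) //.
  by rewrite lef_pV2 ?posrE ?ltr0n // ler_nat.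
have xn1 : d x (u n).1 < r by lra.
have xn2 : d x (u n).2 < r by have := metric_triangle x (u n).1 (u n).2; lra.
have := Hr _ xn1; have := Hr _ xn2.
have := metric_triangle (f (u n).1) (f x) (f (u n).2).
rewrite (metric_sym (f (u n).1) (f x)); lra.
Qed.

Lemma compact_unif_continuous_iter (f : X -> X) : continuous f ->
  forall K e, 0 < e -> exists2 r, 0 < r & forall i x y, (i <= K)%N ->
    d x y < r -> d (iter i f x) (iter i f y) < e.
Proof.
move=> cf; elim=> [|K IH] e e0.
  by exists e => // i x y; rewrite leqn0 => /eqP ->.
have [r1 r10 H1] := IH e e0.
have [r2 r20 H2] := compact_unif_continuous (continuous_iter (n := K.+1) cf) e0.
exists (Num.min r1 r2) => [|i x y]; first by rewrite lt_min r10 r20.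
rewrite leq_eqVlt ltnS lt_min => /orP [/eqP ->|iK] /andP [xy1 xy2].
- exact: H2.
- exact: H1.
Qed.

Lemma ball_not_sub_closure (A : set X) (c : X) (r : R) :
  ~ (ball c r `<=` closure A) ->
  exists c' r', 0 < r' /\ ball c' (2 * r') `<=` ball c r `\` A.
Proof.
move=> nsub.
have [y cy ny] : exists2 y, ball c r y & ~ closure A y.
  apply: contrapT => nex; apply: nsub => y cy.
  by apply: contrapT => ny; apply: nex; exists y.
have [B yB AB] : exists2 B, nbhs y B & ~ (A `&` B !=set0).
  apply: contrapT => nex; apply: ny => B yB.
  by apply: contrapT => nAB; apply: nex; exists B.
have /nbhs_ballP [s s0 sB] := yB.
move: cy; rewrite ballEmdist /= => cy.
exists y, (Num.min s (r - d c y) / 2); split.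
  by rewrite divr_gt0 // lt_min s0 subr_gt0.
move=> z; rewrite ballEmdist /= mulrC divfK ?pnatr_eq0 // lt_min.
move=> /andP [yzs yzr]; split.
  by have := metric_triangle c y z; lra.
by move=> Az; apply: AB; exists z; split => //; apply: sB; rewrite ballEmdist.
Qed.

Lemma compact_baire_ball (A : nat -> set X) (c0 : X) (r0 : R) : 0 < r0 ->
  ball c0 r0 `<=` \bigcup_n A n ->
  exists n c r, 0 < r /\ ball c r `<=` closure (A n).
Proof.
move=> r00 cover; apply: contrapT => nH.
have shrink (ncr : nat * (X * R)) : exists cr' : X * R, 0 < ncr.2.2 ->
    0 < cr'.2 /\ ball cr'.1 (2 * cr'.2) `<=` ball ncr.2.1 ncr.2.2 `\` A ncr.1.
  case: ncr => n [c r] /=; case: (pselect (0 < r)) => [r_pos|]; last by exists (c, r).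
  have [|c' [r' [r'0 sub]]] := @ball_not_sub_closure (A n) c r.
    by move=> sub; apply: nH; exists n, c, r.
  by exists (c', r').
have [next Hnext] := choice shrink.
pose fix B k := if k is k'.+1 then next (k', B k') else (c0, r0).
have Bpos k : 0 < (B k).2 by elim: k => [|k IH] //=; have [] := Hnext (k, B k) IH.
have Bsub k : ball (B k.+1).1 (2 * (B k.+1).2) `<=` ball (B k).1 (B k).2 `\` A k.
  by have [] := Hnext (k, B k) (Bpos k).
have Bnest k m : (k <= m)%N -> ball (B m).1 (B m).2 `<=` ball (B k).1 (B k).2.
  elim: m => [|m IH]; first by rewrite leqn0 => /eqP ->.
  rewrite leq_eqVlt ltnS => /orP [/eqP -> //|km] y By.
  have By2 : ball (B m.+1).1 (2 * (B m.+1).2) y.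
    by apply: le_ball By; rewrite ler_peMl ?ler1n // ltW.
  by apply: IH => //; case: (Bsub m y By2).
have [z cz] := compact_cluster_seq (fun k => (B k).1).
have zin k : ball (B k.+1).1 (2 * (B k.+1).2) z.
  have [m km /= zm] := cz _ (Bpos k.+1) k.+1.
  have := Bnest _ _ km (B m).1 (ballxx _ (Bpos m)).
  rewrite !ballEmdist /= (metric_sym z) in zm * => Bm.
  by have := metric_triangle (B k.+1).1 (B m).1 z; lra.
have [n _ An] := cover z (Bsub 0%N z (zin 0%N)).1.
by have [_] := Bsub n z (zin n).
Qed.

Section MinimalSystem.
Variable T : X -> X.
Hypotheses (cT : continuous T) (mT : minimal T).

Lemma minimal_orbit_mdist (x z : X) (e : R) : 0 < e ->
  exists n, d z (iter n T x) < e.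
Proof.
move=> e0; have : closure (Defs.orbit T x) z by rewrite mT.
move=> /(_ (ball z e) (nbhsx_ballx _ _ e0)) [_ [[n _ <-]]].
by rewrite ballEmdist => zn; exists n.
Qed.

Lemma minimal_syndetic (z : X) (e : R) : 0 < e ->
  exists N, forall x, exists2 n, (n <= N)%N & d z (iter n T x) < e.
Proof.
move=> e0; apply: contrapT => nH.
have far N : exists x, forall n, (n <= N)%N -> e <= d z (iter n T x).
  apply: contrapT => nex; apply: nH; exists N => x.
  apply: contrapT => nx; apply: nex; exists x => n nN.
  by rewrite leNgt; apply/negP => zn; apply: nx; exists n.
have [u Hu] := choice far.
have [x cx] := compact_cluster_seq u.
have e2 : 0 < e / 2 by rewrite divr_gt0.
have [n0 zx] := minimal_orbit_mdist x z e2.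
have [r r0 Hr] := continuous_mdist_lt (continuous_iter (n := n0) cT (x := x)) e2.
have [n n0n xn] := cx _ r0 n0.
have := Hu n n0 n0n; have := Hr _ xn.
by have := metric_triangle z (iter n0 T x) (iter n0 T (u n)); lra.
Qed.

Lemma separated_times_nbhd (F : seq nat) (x y : X) (del : R) :
  {in F, forall t, del < d (iter t T x) (iter t T y)} ->
  exists2 eta, 0 < eta & forall u v, d x u < eta -> d y v < eta ->
    {in F, forall t, del < d (iter t T u) (iter t T v)}.
Proof.
elim: F => [|t F IH] sep; first by exists 1.
have [e1 e10 H1] := IH (fun s sF => sep s (mem_behead (s := t :: F) sF)).
set m := d (iter t T x) (iter t T y) - del.
have m2 : 0 < m / 2 by rewrite divr_gt0 // subr_gt0 sep ?mem_head.
have [r1 r10 Hr1] := continuous_mdist_lt (continuous_iter (n := t) cT (x := x)) m2.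
have [r2 r20 Hr2] := continuous_mdist_lt (continuous_iter (n := t) cT (x := y)) m2.
exists (Num.min e1 (Num.min r1 r2)) => [|u v]; first by rewrite !lt_min e10 r10 r20.
rewrite !lt_min => /and3P [xu1 xu2 _] /and3P [yv1 _ yv3] s.
rewrite inE => /orP [/eqP ->|/H1]; last exact.
have := Hr1 _ xu2; have := Hr2 _ yv3; rewrite /m (metric_sym (iter t T y)).
have := metric_triangle (iter t T x) (iter t T u) (iter t T y).
by have := metric_triangle (iter t T u) (iter t T v) (iter t T y); lra.
Qed.

Lemma proximal_return (a x : X) (j : nat) : proximal_pair T a x ->
  forall e, 0 < e -> exists2 p, (0 < p)%N &
    [/\ d x (iter p T x) < e, d x (iter p T a) < e &
        d (iter j T x) (iter p T (iter j T x)) < e].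
Proof.
move=> pax e e0.
have [r r0 Hr] := continuous_mdist_lt (continuous_iter (n := j) cT (x := x)) e0.
set e' := Num.min e r.
have e'2 : 0 < e' / 2 by rewrite divr_gt0 // lt_min e0 r0.
have [N HN] := minimal_syndetic x e'2.
have [g g0 Hg] := compact_unif_continuous_iter cT N.+1 e'2.
have [n ax] := pax g g0.
(* At time [n] the orbits of [a] and [x] are close; the next return of [x] near itself
   happens within [N.+1] more steps and drags [a] along by equicontinuity. *)
have [i iN xi] := HN (iter n.+1 T x).
exists (i.+1 + n)%N => //.
have xp : d x (iter (i.+1 + n) T x) < e' / 2 by rewrite addSnnS iterD.
have ap : d (iter (i.+1 + n) T x) (iter (i.+1 + n) T a) < e' / 2.
  by rewrite !iterD; apply: Hg; rewrite // metric_sym.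
have e'e : e' <= e by rewrite ge_min lexx.
have e'r : e' <= r by rewrite ge_min lexx orbT.
split.
- lra.
- by have := metric_triangle x (iter (i.+1 + n) T x) (iter (i.+1 + n) T a); lra.
- by rewrite -iterD addnC iterD; apply: Hr; lra.
Qed.

Lemma proximal_separated_F_ip (a x : X) (j : nat) (del : R) : proximal_pair T a x ->
  del < d x (iter j T x) ->
  F_ip [set n | del < d (iter n T a) (iter n T (iter j T x))].
Proof.
move=> pax sep; set b := iter j T x.
apply: (@F_ip_of_extend (fun n => del < d (iter n T x) (iter n T b))) => // F sepF.
have [eta eta0 Heta] := separated_times_nbhd sepF.
have [p p0 [xp ap bp]] := proximal_return j pax eta0.
exists p => // t tF; rewrite /= !iterD.
by split; apply: (Heta _ _ _ _ t tF).
Qed.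

End MinimalSystem.

Definition fiber_gap (Y : Type) (pi : X -> Y) (eps : R) : set X :=
  [set x | exists2 x', pi x' = pi x & eps <= d x x'].

Lemma not_almost_one_to_one_fiber_gap (Y : metricType R) (pi : X -> Y) :
  ~ almost_one_to_one pi ->
  exists n c r, 0 < r /\ ball c r `<=` closure (fiber_gap pi n.+1%:R^-1).
Proof.
move=> /denseNE [V [[c0 [oV Vc0]] Vnot1]].
have /nbhs_ballP [r0 r00 r0V] : nbhs c0 V by exact: open_nbhs_nbhs.
apply: compact_baire_ball r00 _ => x /r0V Vx.
have [x' px' x'x] : exists2 x', pi x' = pi x & x' <> x.
  apply: contrapT => nex; have : (V `&` [set x | pi @^-1` [set pi x] = [set x]]) x.
    split => //; apply/seteqP; split => [y /= pyx|y /= ->] //.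
    by apply: contrapT => yx; apply: nex; exists y.
  by rewrite Vnot1.
have [n] : exists n : nat, n.+1%:R^-1 < d x x'.
  have /ltr_add_invr [n] : 0 < d x x' by rewrite mdist_gt0 eq_sym; apply/eqP.
  by rewrite add0r; exists n.
by move=> /ltW gap; exists n => //; exists x'.
Qed.

Section Homeomorphism.
Variables (T g : X -> X) (Y : Type) (S : Y -> Y) (pi : X -> Y).
Hypotheses (cT : continuous T) (mT : minimal T).
Hypotheses (Tg : cancel T g) (gT : cancel g T) (cg : continuous g).
Hypothesis piT : forall x, pi (T x) = S (pi x).

Lemma iter_factor (n : nat) (x : X) : pi (iter n T x) = iter n S (pi x).
Proof. by elim: n => [|n IH] //=; rewrite piT IH. Qed.

Lemma iter_cancel (n : nat) : cancel (iter n T) (iter n g).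
Proof. by elim: n => [|n IH] x //; rewrite iterSr /= Tg IH. Qed.

Lemma iter_cancelV (n : nat) : cancel (iter n g) (iter n T).
Proof. by elim: n => [|n IH] x //; rewrite iterSr /= gT IH. Qed.

Lemma minimal_fiber_gap_dense (eps : R) (c : X) (r : R) : 0 < eps -> 0 < r ->
  ball c r `<=` closure (fiber_gap pi eps) ->
  exists2 gam, 0 < gam & forall u rho, 0 < rho ->
    exists2 a, d u a < rho & fiber_gap pi gam a.
Proof.
move=> eps0 r0 sub.
have [N HN] := minimal_syndetic cT mT c r0.
have [gam gam0 Hg] := compact_unif_continuous_iter cg N eps0.
exists gam => // u rho rho0.
have [m mN cm] := HN (iter N g u).
set e := iter m T (iter N g u).
have Tie : iter (N - m) T e = u by rewrite /e -iterD subnK // iter_cancelV.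
have [eta eta0 Heta] :=
  continuous_mdist_lt (continuous_iter (n := N - m) cT (x := e)) rho0.
have [|a' [[x' px' gap'] ea']] := sub e _ (ball e eta) (nbhsx_ballx _ _ eta0).
  by rewrite ballEmdist.
move: ea'; rewrite ballEmdist /= => /Heta; rewrite Tie => ua.
exists (iter (N - m) T a') => //; exists (iter (N - m) T x').
  by rewrite !iter_factor px'.
rewrite leNgt; apply/negP => /(Hg _ _ _ (leq_subr m N)).
by rewrite !iter_cancel ltNge gap'.
Qed.

End Homeomorphism.

End CompactMetric.

Theorem proposition4p7 (R : realType) (X Y : metricType R)
  (T : X -> X) (S : Y -> Y) (pi : X -> Y) :
  TDS T -> TDS S -> homeomorphism T -> minimal T -> minimal S ->
  factor_map T S pi -> proximal_map T pi -> ~ almost_one_to_one pi ->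
  strongly_Fip_sensitive T.
Proof.
move=> [cX [cT _]] _ [g [Tg gT _ cg]] mT _ [_ _ piT] prox not1to1.
have [n [c [r [r0 sub]]]] := not_almost_one_to_one_fiber_gap cX not1to1.
have [|gam gam0 gap] := minimal_fiber_gap_dense cX cT mT Tg gT cg piT _ r0 sub.
  by rewrite invr_gt0.
exists (gam / 4) => [|U oU [u Uu]]; first by rewrite divr_gt0.
have [rho rho0 rhoU] := open_mdist_lt oU Uu.
set rho' := Num.min rho (gam / 4).
have rho'0 : 0 < rho' by rewrite lt_min rho0 divr_gt0.
have [rho'rho rho'gam] : rho' <= rho /\ rho' <= gam / 4.
  by rewrite /rho' !ge_min !lexx orbT.
have [a ua [x pxa gam_ax]] := gap u rho' rho'0.
have [j ujx] := minimal_orbit_mdist mT x u rho'0.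
have sep : gam / 4 < mdist x (iter j T x).
  have := metric_triangle a u x; have := metric_triangle u (iter j T x) x.
  by rewrite (metric_sym a u) (metric_sym (iter j T x) x); lra.
exists a, (iter j T x); split; [apply: rhoU; lra | apply: rhoU; lra |].
exact: (proximal_separated_F_ip cX cT mT (prox a x (esym pxa)) sep).
Qed.
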